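(* Let $z,x,y\in[0,1]$ satisfy $z=x+y$, and write their concise binary expansions as $z=(z_0.z_1z_2\ldots)_2$, $x=(x_0.x_1x_2\ldots)_2$, $y=(y_0.y_1y_2\ldots)_2$. Suppose $0\le \ell<\ell'$ are indices such that $z_\ell=1$, $z_{\ell'}=1$, and $z_j=0$ for all $\ell+1\le j\le \ell'-1$. Then the bit pairs $(x_j,y_j)$ for $\ell\le j\le \ell'$ satisfy exactly one of the following three patterns: (1) $(x_\ell,y_\ell)\in\{(0,1),(1,0)\}$, $(x_j,y_j)=(0,0)$ for all $\ell<j<\ell'$, and $(x_{\ell'},y_{\ell'})\in\{(0,0),(0,1),(1,0)\}$; (2) $(x_\ell,y_\ell)\in\{(0,0),(1,1)\}$, $(x_j,y_j)\in\{(0,1),(1,0)\}$ for all $\ell<j<\ell'$, and $(x_{\ell'},y_{\ell'})=(1,1)$; (3) $(x_\ell,y_\ell)\in\{(0,0),(1,1)\}$, and there are integers $k_1,k_2\ge 0$ with $k_1+k_2=\ell'-\ell-2$ such that $(x_j,y_j)\in\{(0,1),(1,0)\}$ for $\ell<j\le \ell+k_1$, $(x_{\ell+k_1+1},y_{\ell+k_1+1})=(1,1)$, $(x_j,y_j)=(0,0)$ for $\ell+k_1+1<j<\ell'$, and $(x_{\ell'},y_{\ell'})\in\{(0,0),(0,1),(1,0)\}$.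
   Context: A concise binary expansion of a real number is a binary representation $(z_0.z_1z_2\ldots)_2=\sum_{i\ge0} z_i2^{-i}$ with $z_i\in\{0,1\}$ that does not end in an infinite string of 1s. *)

From Stdlib Require Import Reals Lra Lia.
From Coquelicot Require Import Coquelicot.
Open Scope R_scope.

Definition bitR (b : bool) : R := if b then 1 else 0.

Definition concise_binary (b : nat -> bool) (x : R) : Prop :=
  is_series (fun i => bitR (b i) / 2 ^ i) x /\
  ~ (exists N : nat, forall n : nat, (N <= n)%nat -> b n = true).

Definition exactly_one3 (P Q S : Prop) : Prop :=
  (P /\ ~ Q /\ ~ S) \/ (~ P /\ Q /\ ~ S) \/ (~ P /\ ~ Q /\ S).

From Stdlib Require Import Reals Lra Lia Classical.
From Coquelicot Require Import Coquelicot.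
Open Scope R_scope.

(** Write [tail b m] for the value of the binary fraction [0.b_m b_(m+1) ...].
    Then [E m = tail xb m + tail yb m - tail zb m] is the carry that the
    digits from position [m] on send to position [m - 1]: it vanishes at
    [m = 0] because [z = x + y], it satisfies
    [2 E m = x_m + y_m + E (m + 1) - z_m], and conciseness makes every tail
    smaller than [1], so [-1 < E m < 2] and [E m] is always [0] or [1].  Hence
    the three expansions are related by the full-adder equations.  In a run of
    zero digits of [z], an incoming carry passes through mixed pairs only,
    while without an incoming carry the pairs are [(0,0)] up to the first
    [(1,1)], which creates one.  The carry out of position [l'] is [1] exactly
    in pattern (2); otherwise no [(1,1)] in the gap gives pattern (1), and a
    [(1,1)] gives pattern (3). *)

Lemma bitR_bounds (b : bool) : 0 <= bitR b <= 1.
Proof. destruct b; simpl; lra. Qed.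

Lemma Series_nonneg (a : nat -> R) :
  (forall n, 0 <= a n) -> ex_series a -> 0 <= Series a.
Proof.
  intros Ha Hex.
  rewrite <- (Rmult_0_l (Series a)), <- Series_scal_l.
  apply Series_le; [| exact Hex].
  intros n; specialize (Ha n); lra.
Qed.

Lemma is_series_inv_pow2 : is_series (fun k => / 2 ^ S k) 1.
Proof.
  assert (Hgeom := is_series_geom (/ 2)).
  rewrite Rabs_pos_eq in Hgeom by lra.
  specialize (Hgeom ltac:(lra)).
  apply (is_series_scal_l (/ 2)) in Hgeom.
  replace 1 with (scal (/ 2) (/ (1 - / 2))) by (compute; field).
  eapply is_series_ext; [| exact Hgeom].
  intros k; rewrite <- pow_inv; reflexivity.
Qed.

Definition tail (b : nat -> bool) (m : nat) : R :=
  Series (fun k => bitR (b (m + k)%nat) / 2 ^ S k).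

Lemma tail_term_bounds (b : nat -> bool) (m k : nat) :
  0 <= bitR (b (m + k)%nat) / 2 ^ S k <= / 2 ^ S k.
Proof.
  pose proof (bitR_bounds (b (m + k)%nat)).
  assert (0 < / 2 ^ S k) by (apply Rinv_0_lt_compat, pow_lt; lra).
  unfold Rdiv; split; nra.
Qed.

Lemma ex_series_tail (b : nat -> bool) (m : nat) :
  ex_series (fun k => bitR (b (m + k)%nat) / 2 ^ S k).
Proof.
  apply (@ex_series_le R_AbsRing R_CompleteNormedModule _ (fun k => / 2 ^ S k)).
  - intros k; destruct (tail_term_bounds b m k).
    change (Rabs (bitR (b (m + k)%nat) / 2 ^ S k) <= / 2 ^ S k).
    rewrite Rabs_pos_eq; lra.
  - exists 1; exact is_series_inv_pow2.
Qed.

Lemma tail_bounds (b : nat -> bool) (m : nat) : 0 <= tail b m <= 1.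
Proof.
  split.
  - apply Series_nonneg; [apply tail_term_bounds | apply ex_series_tail].
  - rewrite <- (is_series_unique _ _ is_series_inv_pow2).
    apply Series_le; [apply tail_term_bounds | exists 1; exact is_series_inv_pow2].
Qed.

Lemma tail_S (b : nat -> bool) (m : nat) :
  tail b m = (bitR (b m) + tail b (S m)) / 2.
Proof.
  unfold tail; rewrite Series_incr_1 by apply ex_series_tail.
  rewrite Nat.add_0_r.
  replace (Series (fun k => bitR (b (m + S k)%nat) / 2 ^ S (S k)))
    with (/ 2 * Series (fun k => bitR (b (S m + k)%nat) / 2 ^ S k)).
  - simpl; field.
  - rewrite <- Series_scal_l; apply Series_ext; intros k.
    replace (m + S k)%nat with (S m + k)%nat by lia.
    simpl; field; apply pow_nonzero; lra.
Qed.

Lemma concise_tail0 (b : nat -> bool) (x : R) :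
  concise_binary b x -> tail b 0 = x / 2.
Proof.
  intros [Hx _]; apply is_series_unique.
  apply (is_series_scal_l (/ 2)) in Hx.
  replace (x / 2) with (scal (/ 2) x) by (compute; field).
  eapply is_series_ext; [| exact Hx].
  intros k; compute; field; apply pow_nonzero; lra.
Qed.

Lemma tail_lt_1_of_digit_false (b : nat -> bool) (m d : nat) :
  b (m + d)%nat = false -> tail b m < 1.
Proof.
  revert m; induction d as [| d IH]; intros m Hb; rewrite tail_S;
    pose proof (tail_bounds b (S m)); pose proof (bitR_bounds (b m)).
  - rewrite Nat.add_0_r in Hb; rewrite Hb; simpl; lra.
  - assert (tail b (S m) < 1) by (apply IH; rewrite <- Hb; f_equal; lia).
    lra.
Qed.

Lemma concise_tail_lt_1 (b : nat -> bool) (x : R) (m : nat) :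
  concise_binary b x -> tail b m < 1.
Proof.
  intros [_ Hnot_ones].
  destruct (classic (exists n, (m <= n)%nat /\ b n = false)) as [[n [Hmn Hbn]] | Hnone].
  - apply (tail_lt_1_of_digit_false b m (n - m)).
    replace (m + (n - m))%nat with n by lia; exact Hbn.
  - exfalso; apply Hnot_ones; exists m; intros n Hmn.
    destruct (b n) eqn:Hbn; [reflexivity |].
    exfalso; apply Hnone; exists n; auto.
Qed.

Definition maj3 (a b c : bool) : bool := (a && b) || (a && c) || (b && c).
Definition xor3 (a b c : bool) : bool := xorb (xorb a b) c.

Lemma full_adder_bits (a b cin cout s : bool) :
  bitR a + bitR b + bitR cin = bitR s + 2 * bitR cout ->
  cout = maj3 a b cin /\ s = xor3 a b cin.
Proof. destruct a, b, cin, cout, s; simpl; intros H; split; auto; lra. Qed.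

Lemma binary_sum_carries (z x y : R) (xb yb zb : nat -> bool) :
  z = x + y -> concise_binary zb z -> concise_binary xb x -> concise_binary yb y ->
  exists c : nat -> bool, forall m,
    c m = maj3 (xb m) (yb m) (c (S m)) /\ zb m = xor3 (xb m) (yb m) (c (S m)).
Proof.
  intros Hsum Cz Cx Cy.
  set (E m := tail xb m + tail yb m - tail zb m).
  assert (E_S : forall m, 2 * E m = bitR (xb m) + bitR (yb m) + E (S m) - bitR (zb m)).
  { intros m; unfold E; rewrite (tail_S xb m), (tail_S yb m), (tail_S zb m); lra. }
  assert (E_01 : forall m, E m = 0 \/ E m = 1).
  { induction m as [| m IH].
    - left; unfold E; rewrite (concise_tail0 _ _ Cz), (concise_tail0 _ _ Cx),
        (concise_tail0 _ _ Cy), Hsum; lra.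
    - pose proof (E_S m).
      pose proof (tail_bounds xb (S m)); pose proof (concise_tail_lt_1 _ _ (S m) Cx).
      pose proof (tail_bounds yb (S m)); pose proof (concise_tail_lt_1 _ _ (S m) Cy).
      pose proof (tail_bounds zb (S m)); pose proof (concise_tail_lt_1 _ _ (S m) Cz).
      unfold E in *; destruct IH, (xb m), (yb m), (zb m); simpl bitR in *; lra. }
  exists (fun m => if Rle_dec 1 (E m) then true else false).
  assert (E_bit : forall m, E m = bitR (if Rle_dec 1 (E m) then true else false)).
  { intros m; destruct (Rle_dec 1 (E m)), (E_01 m); simpl; lra. }
  intros m; apply full_adder_bits.
  rewrite <- !E_bit, E_S; ring.
Qed.

Definition mixed_bits (a b : bool) : Prop :=
  (a, b) = (false, true) \/ (a, b) = (true, false).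
Definition equal_bits (a b : bool) : Prop :=
  (a, b) = (false, false) \/ (a, b) = (true, true).
Definition not_both_bits (a b : bool) : Prop :=
  (a, b) = (false, false) \/ (a, b) = (false, true) \/ (a, b) = (true, false).

Definition pattern1 (xb yb : nat -> bool) (l l' : nat) : Prop :=
  mixed_bits (xb l) (yb l) /\
  (forall j, (l < j < l')%nat -> (xb j, yb j) = (false, false)) /\
  not_both_bits (xb l') (yb l').

Definition pattern2 (xb yb : nat -> bool) (l l' : nat) : Prop :=
  equal_bits (xb l) (yb l) /\
  (forall j, (l < j < l')%nat -> mixed_bits (xb j) (yb j)) /\
  (xb l', yb l') = (true, true).

Definition pattern3 (xb yb : nat -> bool) (l l' : nat) : Prop :=
  equal_bits (xb l) (yb l) /\
  exists k1 k2 : nat, (l + k1 + k2 + 2 = l')%nat /\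
    (forall j, (l < j <= l + k1)%nat -> mixed_bits (xb j) (yb j)) /\
    (xb (l + k1 + 1)%nat, yb (l + k1 + 1)%nat) = (true, true) /\
    (forall j, (l + k1 + 1 < j < l')%nat -> (xb j, yb j) = (false, false)) /\
    not_both_bits (xb l') (yb l').

Lemma mixed_not_equal_bits (a b : bool) : mixed_bits a b -> ~ equal_bits a b.
Proof. unfold mixed_bits, equal_bits; intros [H | H] [H' | H']; congruence. Qed.

Lemma not_both_bits_neq (a b : bool) : not_both_bits a b -> (a, b) <> (true, true).
Proof. unfold not_both_bits; intros [H | [H | H]]; congruence. Qed.

Lemma pattern1_not_pattern2 xb yb l l' : pattern1 xb yb l l' -> ~ pattern2 xb yb l l'.
Proof. intros [H _] [H' _]; exact (mixed_not_equal_bits _ _ H H'). Qed.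

Lemma pattern1_not_pattern3 xb yb l l' : pattern1 xb yb l l' -> ~ pattern3 xb yb l l'.
Proof. intros [H _] [H' _]; exact (mixed_not_equal_bits _ _ H H'). Qed.

Lemma pattern2_not_pattern3 xb yb l l' : pattern2 xb yb l l' -> ~ pattern3 xb yb l l'.
Proof.
  intros (_ & _ & H11) (_ & _ & _ & _ & _ & _ & _ & Hnot11).
  exact (not_both_bits_neq _ _ Hnot11 H11).
Qed.

Lemma exactly_one3_intro (P Q S : Prop) :
  (P -> ~ Q) -> (P -> ~ S) -> (Q -> ~ S) -> P \/ Q \/ S -> exactly_one3 P Q S.
Proof. unfold exactly_one3; tauto. Qed.

Section CarryChain.

Variables xb yb zb c : nat -> bool.
Hypothesis full_adder : forall j,
  c j = maj3 (xb j) (yb j) (c (S j)) /\ zb j = xor3 (xb j) (yb j) (c (S j)).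

Ltac truth_table j :=
  destruct (full_adder j) as [Hc Hz];
  unfold mixed_bits, equal_bits, not_both_bits;
  destruct (xb j), (yb j), (c (S j)), (c j), (zb j);
  simpl in Hc, Hz; intros; try discriminate; firstorder congruence.

Lemma digit0_carry_in j :
  zb j = false -> c (S j) = true -> mixed_bits (xb j) (yb j) /\ c j = true.
Proof. truth_table j. Qed.

Lemma digit0_no_carry_in j :
  zb j = false -> c (S j) = false ->
  ((xb j, yb j) = (false, false) /\ c j = false) \/
  ((xb j, yb j) = (true, true) /\ c j = true).
Proof. truth_table j. Qed.

Lemma digit1_carry_in j :
  zb j = true -> c (S j) = true -> equal_bits (xb j) (yb j).
Proof. truth_table j. Qed.

Lemma digit1_no_carry_in j :
  zb j = true -> c (S j) = false -> mixed_bits (xb j) (yb j).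
Proof. truth_table j. Qed.

Lemma digit1_carry_out j :
  zb j = true -> c j = true -> (xb j, yb j) = (true, true).
Proof. truth_table j. Qed.

Lemma digit1_no_carry_out j :
  zb j = true -> c j = false -> not_both_bits (xb j) (yb j).
Proof. truth_table j. Qed.

Lemma carry_through_zero_run m n :
  (forall j, (m <= j < m + n)%nat -> zb j = false) -> c (m + n)%nat = true ->
  c m = true /\ forall j, (m <= j < m + n)%nat -> mixed_bits (xb j) (yb j).
Proof.
  induction n as [| n IH]; intros Hzero Hcarry.
  - rewrite Nat.add_0_r in Hcarry; split; [exact Hcarry | intros j Hj; lia].
  - rewrite Nat.add_succ_r in Hcarry.
    destruct (digit0_carry_in (m + n)) as [Hmixed Hc];
      [apply Hzero; lia | exact Hcarry |].
    destruct IH as [Hcm Hrun]; [intros j Hj; apply Hzero; lia | exact Hc |].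
    split; [exact Hcm |].
    intros j Hj; destruct (Nat.eq_dec j (m + n)) as [-> | Hne];
      [exact Hmixed | apply Hrun; lia].
Qed.

Lemma no_carry_into_zero_run m n :
  (forall j, (m <= j < m + n)%nat -> zb j = false) -> c (m + n)%nat = false ->
  (c m = false /\ forall j, (m <= j < m + n)%nat -> (xb j, yb j) = (false, false)) \/
  (exists k, (k < n)%nat /\ (xb (m + k)%nat, yb (m + k)%nat) = (true, true) /\
     c (m + k)%nat = true /\
     forall j, (m + k < j < m + n)%nat -> (xb j, yb j) = (false, false)).
Proof.
  induction n as [| n IH]; intros Hzero Hcarry.
  - rewrite Nat.add_0_r in Hcarry; left; split; [exact Hcarry | intros j Hj; lia].
  - rewrite Nat.add_succ_r in Hcarry.
    destruct (digit0_no_carry_in (m + n)) as [[H00 Hc] | [H11 Hc]];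
      [apply Hzero; lia | exact Hcarry | |].
    + destruct IH as [[Hcm Hrun] | [k (Hk & H11 & Hck & Hrun)]];
        [intros j Hj; apply Hzero; lia | exact Hc | left | right].
      * split; [exact Hcm |].
        intros j Hj; destruct (Nat.eq_dec j (m + n)) as [-> | Hne];
          [exact H00 | apply Hrun; lia].
      * exists k; repeat split; [lia | exact H11 | exact Hck |].
        intros j Hj; destruct (Nat.eq_dec j (m + n)) as [-> | Hne];
          [exact H00 | apply Hrun; lia].
    + right; exists n; repeat split; [lia | exact H11 | exact Hc | intros j Hj; lia].
Qed.

Lemma gap_pattern_cases l l' :
  (l < l')%nat -> zb l = true -> zb l' = true ->
  (forall j, (l + 1 <= j <= l' - 1)%nat -> zb j = false) ->
  pattern1 xb yb l l' \/ pattern2 xb yb l l' \/ pattern3 xb yb l l'.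
Proof.
  intros Hll' Hzl Hzl' Hgap.
  set (n := (l' - l - 1)%nat).
  assert (Hl' : (S l + n)%nat = l') by (unfold n; lia).
  assert (Hzero : forall j, (S l <= j < S l + n)%nat -> zb j = false)
    by (intros j Hj; apply Hgap; lia).
  destruct (c l') eqn:Hcl'.
  - destruct (carry_through_zero_run (S l) n Hzero) as [Hcl Hmixed];
      [rewrite Hl'; exact Hcl' |].
    right; left; split; [| split].
    + exact (digit1_carry_in l Hzl Hcl).
    + intros j Hj; apply Hmixed; lia.
    + exact (digit1_carry_out l' Hzl' Hcl').
  - destruct (no_carry_into_zero_run (S l) n Hzero)
      as [[Hcl H00] | [k (Hk & H11 & Hck & H00)]];
      [rewrite Hl'; exact Hcl' | left | right; right].
    + split; [| split].
      * exact (digit1_no_carry_in l Hzl Hcl).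
      * intros j Hj; apply H00; lia.
      * exact (digit1_no_carry_out l' Hzl' Hcl').
    + destruct (carry_through_zero_run (S l) k) as [Hcl Hmixed];
        [intros j Hj; apply Hzero; lia | exact Hck |].
      split; [exact (digit1_carry_in l Hzl Hcl) |].
      exists k, (n - 1 - k)%nat.
      split; [lia |].
      split; [intros j Hj; apply Hmixed; lia |].
      split; [replace (l + k + 1)%nat with (S l + k)%nat by lia; exact H11 |].
      split; [intros j Hj; apply H00; lia |].
      exact (digit1_no_carry_out l' Hzl' Hcl').
Qed.

End CarryChain.
Theorem theorem4p4 (z x y : R) (xb yb zb : nat -> bool) (l l' : nat) :
  0 <= z <= 1 -> 0 <= x <= 1 -> 0 <= y <= 1 -> z = x + y ->
  concise_binary zb z -> concise_binary xb x -> concise_binary yb y ->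
  (l < l')%nat -> zb l = true -> zb l' = true ->
  (forall j : nat, (l + 1 <= j <= l' - 1)%nat -> zb j = false) ->
  exactly_one3
    (* pattern (1) *)
    (((xb l, yb l) = (false, true) \/ (xb l, yb l) = (true, false)) /\
     (forall j : nat, (l < j < l')%nat -> (xb j, yb j) = (false, false)) /\
     ((xb l', yb l') = (false, false) \/ (xb l', yb l') = (false, true) \/
      (xb l', yb l') = (true, false)))
    (* pattern (2) *)
    (((xb l, yb l) = (false, false) \/ (xb l, yb l) = (true, true)) /\
     (forall j : nat, (l < j < l')%nat ->
        (xb j, yb j) = (false, true) \/ (xb j, yb j) = (true, false)) /\
     (xb l', yb l') = (true, true))
    (* pattern (3) *)
    (((xb l, yb l) = (false, false) \/ (xb l, yb l) = (true, true)) /\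
     exists k1 k2 : nat, (l + k1 + k2 + 2 = l')%nat /\
       (forall j : nat, (l < j <= l + k1)%nat ->
          (xb j, yb j) = (false, true) \/ (xb j, yb j) = (true, false)) /\
       (xb (l + k1 + 1)%nat, yb (l + k1 + 1)%nat) = (true, true) /\
       (forall j : nat, (l + k1 + 1 < j < l')%nat -> (xb j, yb j) = (false, false)) /\
       ((xb l', yb l') = (false, false) \/ (xb l', yb l') = (false, true) \/
        (xb l', yb l') = (true, false))).
Proof.
  intros _ _ _ Hsum Cz Cx Cy Hll' Hzl Hzl' Hgap.
  destruct (binary_sum_carries z x y xb yb zb Hsum Cz Cx Cy) as [c Hadder].
  apply (exactly_one3_intro (pattern1 xb yb l l') (pattern2 xb yb l l')
           (pattern3 xb yb l l')).
  - apply pattern1_not_pattern2.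
  - apply pattern1_not_pattern3.
  - apply pattern2_not_pattern3.
  - exact (gap_pattern_cases xb yb zb c Hadder l l' Hll' Hzl Hzl' Hgap).
Qed.
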